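(* Let $d\geq 2$ and $m\geq 1$ be integers. Let $\{e^d_k\}$ and $\{e^{d+m}_k\}$ be the standard bases of $\mathbb{C}^d$ and $\mathbb{C}^{d+m}$, and let $|J\rangle=\sum_{k=1}^d e^d_k$. Define $d\times(d+m)$ matrices $$V_i=\sum_{k=1}^{d}|e^d_k\rangle\langle e^{d+m}_{\mathrm{mod}(k+i-2,\,d+1)+1}|\quad (i=1,\dots,d+1),\qquad V_i=|J\rangle\langle e^{d+m}_i|\quad (i=d+2,\dots,d+m),$$ where $\mathrm{mod}(a,n)\in\{0,\dots,n-1\}$ is the remainder of $a$ modulo $n$, and let $\Phi:M_d\to M_{d+m}$ be $\Phi(X)=\frac{1}{d(d+m)}\sum_{i=1}^{d+m}V_i^\dagger XV_i$. Let $\rho=\sum_{r,s=1}^{d}E_{rs}\otimes\Phi(E_{rs})\in M_d\otimes M_{d+m}$ be the Choi state of $\Phi$. Then $\rho$ has positive partial transpose, i.e. $(T\otimes\mathrm{id})(\rho)\geq 0$, where $T$ is the transpose on $M_d$.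
   Context: $M_n$ denotes the complex $n\times n$ matrices and $E_{rs}$ the matrix units of $M_d$. *)

From HB Require Import structures.
From mathcomp Require Import all_boot all_order all_algebra all_field.
From mathcomp Require Import mxtens.
Set Implicit Arguments. Unset Strict Implicit. Unset Printing Implicit Defensive.
Import Order.TTheory GRing.Theory Num.Theory.
Local Open Scope ring_scope.

Definition adjmx {m n : nat} (A : 'M[algC]_(m, n)) : 'M[algC]_(n, m) :=
  (map_mx Num.conj A)^T.

Definition psdmx {n : nat} (A : 'M[algC]_n) : Prop :=
  adjmx A = A /\ forall v : 'cV[algC]_n, 0 <= (adjmx v *m A *m v) 0 0.

(* partial transpose T (x) id on M_p (x) M_q, with the Kronecker index
   convention of mxtens ((a,b) |-> a*q + b). *)
Definition ptrans1 {p q : nat} (A : 'M[algC]_(p * q)) : 'M[algC]_(p * q) :=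
  \matrix_(i, j)
    A (mxtens_index ((mxtens_unindex j).1, (mxtens_unindex i).2))
      (mxtens_index ((mxtens_unindex i).1, (mxtens_unindex j).2)).

(* The Kraus-like operators V_i (0-based indices i < d+m, rows k < d,
   columns c < d+m):
   - i <= d   (paper's i = 1..d+1): V_i = sum_k |e_k><e_{(k+i) mod (d+1)}|
   - i >  d   (paper's i = d+2..d+m): V_i = |J><e_i|. *)
Definition Vop (d m : nat) (i : 'I_(d + m)) : 'M[algC]_(d, d + m) :=
  \matrix_(k < d, c < d + m)
    (if (i <= d)%N then ((c : nat) == (k + i) %% d.+1)%N%:R
     else ((c : nat) == i)%N%:R).

Arguments Vop : clear implicits.

Definition Phi (d m : nat) (X : 'M[algC]_d) : 'M[algC]_(d + m) :=
  (d * (d + m))%N%:R^-1 *: \sum_(i < d + m) (adjmx (Vop d m i) *m X *m Vop d m i).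

Arguments Phi d m X : clear implicits.

Definition choi (d m : nat) : 'M[algC]_(d * (d + m)) :=
  \sum_(r < d) \sum_(s < d) (delta_mx r s *t Phi d m (delta_mx r s)).

From HB Require Import structures.
From mathcomp Require Import all_boot all_order all_algebra all_field.
From mathcomp Require Import mxtens.
Import Order.TTheory GRing.Theory Num.Theory.
Local Open Scope ring_scope.

(* Every V_i is a 0/1 matrix whose row k has its single 1 in column
   [cshift d k i], where [cshift d k] rotates {0, ..., d} by k and fixes the
   larger indices.  Hence the partially transposed Choi matrix has entry
   ((r,a),(s,b)) equal, up to the factor 1/(d(d+m)), to the number of i with
   [cshift d s i = a] and [cshift d r i = b]; as the rotations form a cyclic
   group, this number is 1 if [cshift d r a = cshift d s b] and 0 otherwise.
   So the matrix is B B^* for the 0/1 matrix B of the labelling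
   (r,a) |-> cshift d r a, a Gram matrix, hence positive semidefinite. *)

Lemma adjmxE {p q : nat} (A : 'M[algC]_(p, q)) i j : adjmx A i j = (A j i)^*.
Proof. by rewrite !mxE. Qed.

Lemma adjmxK {p q : nat} (A : 'M[algC]_(p, q)) : adjmx (adjmx A) = A.
Proof. by apply/matrixP => i j; rewrite !adjmxE conjCK. Qed.

Lemma adjmxM {p q r : nat} (A : 'M[algC]_(p, q)) (B : 'M[algC]_(q, r)) :
  adjmx (A *m B) = adjmx B *m adjmx A.
Proof. by rewrite /adjmx (map_mxM Num.conj) trmx_mul. Qed.

Lemma adjmxZ {p q : nat} (c : algC) (A : 'M[algC]_(p, q)) :
  adjmx (c *: A) = c^* *: adjmx A.
Proof. by apply/matrixP => i j; rewrite !mxE rmorphM. Qed.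

Lemma psdmxZ (n : nat) (c : algC) (A : 'M[algC]_n) :
  0 <= c -> psdmx A -> psdmx (c *: A).
Proof.
move=> c_ge0 [A_herm A_form]; split.
  by rewrite adjmxZ A_herm conj_Creal ?ger0_real.
move=> v; rewrite -scalemxAr -scalemxAl mxE.
exact: mulr_ge0 (A_form v).
Qed.

Lemma psdmx_gram (n k : nat) (B : 'M[algC]_(n, k)) : psdmx (B *m adjmx B).
Proof.
split; first by rewrite adjmxM adjmxK.
have adj_vB v : adjmx v *m B = adjmx (adjmx B *m v) by rewrite adjmxM adjmxK.
move=> v; rewrite mulmxA adj_vB -mulmxA mxE.
by apply: sumr_ge0 => t _; rewrite !mxE mulrC mul_conjC_ge0.
Qed.

Definition graph_mx {p n : nat} (f : 'I_p -> 'I_n) : 'M[algC]_(p, n) :=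
  \matrix_(x, t) (f x == t)%:R.

Lemma graph_mx_gram (p n : nat) (f : 'I_p -> 'I_n) :
  graph_mx f *m adjmx (graph_mx f) = \matrix_(x, y) (f x == f y)%:R.
Proof.
apply/matrixP => x y; rewrite !mxE (bigD1 (f x)) //= big1.
  by rewrite !mxE eqxx conjC_nat mul1r addr0 eq_sym.
by move=> t /negbTE ft; rewrite !mxE eq_sym ft mul0r.
Qed.

Section CyclicShift.

Variable d : nat.

Definition cshift (k i : nat) : nat :=
  if (i <= d)%N then ((k + i) %% d.+1)%N else i.

Lemma cshift_leq k i : (cshift k i <= d)%N = (i <= d)%N.
Proof. by rewrite /cshift; case: ifP => // _; rewrite -ltnS ltn_mod. Qed.

Lemma cshiftD k l i : cshift k (cshift l i) = cshift (k + l) i.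
Proof.
rewrite [cshift k _]/cshift cshift_leq /cshift.
by case: (i <= d)%N; rewrite ?modnDmr ?addnA.
Qed.

Lemma cshiftC k l i : cshift k (cshift l i) = cshift l (cshift k i).
Proof. by rewrite !cshiftD addnC. Qed.

Lemma cshift_period q i : cshift (q * d.+1) i = i.
Proof. by rewrite /cshift; case: ifP => // i_le; rewrite modnMDl modn_small. Qed.

(* [k * d] is the inverse shift of [k], since k + k * d = k * (d + 1). *)
Lemma cshiftK k : cancel (cshift k) (cshift (k * d)).
Proof. by move=> i; rewrite cshiftD -mulnSr cshift_period. Qed.

Lemma cshiftVK k : cancel (cshift (k * d)) (cshift k).
Proof. by move=> i; rewrite cshiftD -{1}(muln1 k) -mulnDr cshift_period. Qed.

Lemma cshift_inj k : injective (cshift k).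
Proof. exact: can_inj (cshiftK k). Qed.

Lemma cshift_ltn k {n i} : (d < n)%N -> (i < n)%N -> (cshift k i < n)%N.
Proof.
move=> d_lt i_lt; case: (leqP i d) => [i_le | i_gt]; last first.
  by rewrite /cshift [(i <= d)%N]leqNgt i_gt.
by apply: leq_ltn_trans d_lt; rewrite cshift_leq.
Qed.

Lemma sum_cshift_coincidence (R : nzSemiRingType) n r s a b :
  (d < n)%N -> (a < n)%N ->
  \sum_(i < n) ((a == cshift s i) && (b == cshift r i))%:R
    = (cshift r a == cshift s b)%:R :> R.
Proof.
move=> d_lt a_lt; pose i0 := Ordinal (cshift_ltn (s * d) d_lt a_lt).
have coincide (i : 'I_n) :
    (a == cshift s i) && (b == cshift r i)
      = (i == i0) && (cshift r a == cshift s b).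
  rewrite eq_sym (can2_eq (cshiftK s) (cshiftVK s)) -val_eqE /=.
  case: eqP => //= ->; rewrite -(inj_eq (@cshift_inj s)) cshiftC cshiftVK.
  by rewrite eq_sym.
under eq_bigr do rewrite coincide.
rewrite (bigD1 i0) //= eqxx big1 ?addr0 // => i /negbTE i_ne.
by rewrite i_ne.
Qed.

End CyclicShift.

Lemma VopE d m i k c : Vop d m i k c = (c == cshift d k i :> nat)%:R.
Proof. by rewrite mxE /cshift; case: ifP. Qed.

Lemma mulmx_delta_entry (p n q : nat) (A : 'M[algC]_(p, n)) (B : 'M[algC]_(n, q))
    s r a b :
  (A *m delta_mx s r *m B) a b = A a s * B r b.
Proof.
rewrite mxE (bigD1 r) //= big1 ?addr0 => [|j j_ne]; rewrite mxE.
  rewrite (bigD1 s) //= big1 ?addr0 => [|k k_ne]; rewrite mxE ?eqxx ?mulr1 //.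
  by rewrite (negbTE k_ne) mulr0.
by rewrite big1 ?mul0r // => k _; rewrite mxE (negbTE j_ne) andbF mulr0.
Qed.

Lemma ptrans1E (p q : nat) (A : 'M[algC]_(p * q)) r s a b :
  ptrans1 A (mxtens_index (r, a)) (mxtens_index (s, b))
    = A (mxtens_index (s, a)) (mxtens_index (r, b)).
Proof. by rewrite mxE !mxtens_indexK. Qed.

Lemma sum_tens_delta_entry (p q : nat) (F : 'M[algC]_p -> 'M[algC]_q) r s a b :
  (\sum_(r' < p) \sum_(s' < p) (delta_mx r' s' *t F (delta_mx r' s')))
      (mxtens_index (r, a)) (mxtens_index (s, b))
    = F (delta_mx r s) a b.
Proof.
rewrite summxE (bigD1 r) //= [X in _ + X]big1 ?addr0 => [|r' r'_ne]; last first.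
  rewrite summxE big1 // => s' _.
  by rewrite tensmxE mxE eq_sym (negbTE r'_ne) mul0r.
rewrite summxE (bigD1 s) //= [X in _ + X]big1 ?addr0 => [|s' s'_ne]; last first.
  by rewrite tensmxE mxE eq_sym (negbTE s'_ne) andbF mul0r.
by rewrite tensmxE mxE !eqxx mul1r.
Qed.

Lemma ptrans1_choiE d m r s a b : (0 < m)%N ->
  ptrans1 (choi d m) (mxtens_index (r, a)) (mxtens_index (s, b))
    = (d * (d + m))%:R^-1 * (cshift d r a == cshift d s b)%:R.
Proof.
move=> m_gt0; have d_lt : (d < d + m)%N by rewrite -{1}(addn0 d) ltn_add2l.
rewrite ptrans1E sum_tens_delta_entry mxE summxE.
rewrite -(sum_cshift_coincidence _ _ _ _ _ _ b d_lt (ltn_ord a)).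
congr (_ * _); apply: eq_bigr => i _.
rewrite mulmx_delta_entry adjmxE !VopE.
by rewrite conjC_nat -natrM mulnb.
Qed.

Theorem mainTheorem5 (d m : nat) (hd : (2 <= d)%N) (hm : (1 <= m)%N) :
  psdmx (ptrans1 (choi d m)).
Proof.
have d_lt : (d < d + m)%N by rewrite -{1}(addn0 d) ltn_add2l.
pose label (x : 'I_(d * (d + m))) : 'I_(d + m) :=
  Ordinal (cshift_ltn d (mxtens_unindex x).1 d_lt (ltn_ord (mxtens_unindex x).2)).
suff -> : ptrans1 (choi d m)
          = (d * (d + m))%:R^-1 *: \matrix_(x, y) (label x == label y)%:R.
  by rewrite -graph_mx_gram; apply/psdmxZ/psdmx_gram; rewrite invr_ge0 ler0n.
apply/matrixP => x y; case: (mxtens_indexP x) => r a; case: (mxtens_indexP y) => s b.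
by rewrite ptrans1_choiE // !mxE /label -val_eqE !mxtens_indexK; apply: erefl.
Qed.
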